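(* In an ado-semilattice $(S,\sqcup,\cap)$, for all $a,b,c,d\in S$: (1) if $d\lesssim a\cap b$ and $d\lesssim b\cap c$ then $d\lesssim a\cap c$; (2) if $d\lesssim a$, $d\lesssim b$ and $d\lesssim a\curlyvee b$ then $d\lesssim a\cap b$.
   Context: An o-semilattice is an algebra $(L,\cap,\sqcup)$ such that $(L,\cap)$ is a semilattice and, with $x\leq y$ iff $x=x\cap y$, for all $x,y,z$: (i) $x\leq x\sqcup y$; (ii) $(x\cap y)\sqcup(y\cap z)\leq y$; (iii) $x\sqcup y\leq x\sqcup(y\cap(x\sqcup y))$; (iv) $x\cap z\leq(x\cap y)\sqcup z$. It is distributive if $(a\cap d)\sqcup((b\cap d)\cap(c\cap d))=((a\cap d)\sqcup(b\cap d))\cap((a\cap d)\sqcup(c\cap d))$ for all $a,b,c,d$. An ado-semilattice is a distributive o-semilattice in which $\sqcup$ is associative. In an ado-semilattice, $x\lesssim y$ means $y\sqcup x=y$, and $a\curlyvee b$ is defined as $(a\sqcup b)\cap(b\sqcup a)$. *)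

Section Defs.
Variable S : Type.
Variables (meet join : S -> S -> S).

Definition ole (x y : S) : Prop := x = meet x y.

Definition is_semilattice : Prop :=
  (forall x y z, meet x (meet y z) = meet (meet x y) z) /\
  (forall x y, meet x y = meet y x) /\
  (forall x, meet x x = x).

Definition is_o_semilattice : Prop :=
  is_semilattice /\
  (forall x y, ole x (join x y)) /\
  (forall x y z, ole (join (meet x y) (meet y z)) y) /\
  (forall x y, ole (join x y) (join x (meet y (join x y)))) /\
  (forall x y z, ole (meet x z) (join (meet x y) z)).

Definition is_distributive : Prop :=
  forall a b c d,
    join (meet a d) (meet (meet b d) (meet c d)) =
    meet (join (meet a d) (meet b d)) (join (meet a d) (meet c d)).

Definition is_ado_semilattice : Prop :=
  is_o_semilattice /\ is_distributive /\
  (forall x y z, join x (join y z) = join (join x y) z).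

Definition olesim (x y : S) : Prop := join y x = y.

Definition ovee (a b : S) : S := meet (join a b) (join b a).

End Defs.

Arguments ole {S} meet x y.
Arguments is_semilattice {S} meet.
Arguments is_o_semilattice {S} meet join.
Arguments is_distributive {S} meet join.
Arguments is_ado_semilattice {S} meet join.
Arguments olesim {S} join x y.
Arguments ovee {S} meet join a b.


(* Both parts follow from one fact: if x and y lie below a common q and
   d ≲ x, d ≲ y, then d ≲ x ∩ y.  For (1) take q = b.  For (2) apply it to a
   and a ⋎ b below a ⊔ b, to b and a ⋎ b below b ⊔ a, and then to the two
   meets below a ⋎ b; in both cases conclude since ≤ implies ≲ and ≲ is
   transitive.  Below q the operation ⊔ is a commutative least upper bound,
   and t = q ∩ (d ⊔ q) satisfies z ⊔ t = q for every z ≤ q with d ≲ z.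
   Distributivity transfers this to (x ∩ y) ⊔ t = q, which forces
   (x ∩ y) ⊔ d ≤ q and then (x ∩ y) ⊔ d = x ∩ y. *)

Section OSemilattices.
Context {S : Type} {meet join : S -> S -> S}.

Local Infix "∩" := meet (at level 40, left associativity).
Local Infix "⊔" := join (at level 50, left associativity).
Local Infix "≤" := (ole meet) (at level 70).
Local Infix "≲" := (olesim join) (at level 70).

Section Semilattice.
Hypothesis Hs : is_semilattice meet.

Let meetA : forall x y z, x ∩ (y ∩ z) = x ∩ y ∩ z := proj1 Hs.
Let meetC : forall x y, x ∩ y = y ∩ x := proj1 (proj2 Hs).
Let meetI : forall x, x ∩ x = x := proj2 (proj2 Hs).

Lemma ole_refl (x : S) : x ≤ x.
Proof. unfold ole. rewrite meetI. reflexivity. Qed.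

Lemma ole_trans {x y z : S} : x ≤ y -> y ≤ z -> x ≤ z.
Proof.
  intros hxy hyz. unfold ole. transitivity (x ∩ (y ∩ z)).
  - rewrite <- hyz. exact hxy.
  - rewrite meetA, <- hxy. reflexivity.
Qed.

Lemma ole_anti {x y : S} : x ≤ y -> y ≤ x -> x = y.
Proof. intros hxy hyx. rewrite hxy, meetC, <- hyx. reflexivity. Qed.

Lemma meet_ole_l (x y : S) : x ∩ y ≤ x.
Proof. unfold ole. rewrite (meetC _ x), meetA, meetI. reflexivity. Qed.

Lemma meet_ole_r (x y : S) : x ∩ y ≤ y.
Proof. unfold ole. rewrite <- meetA, meetI. reflexivity. Qed.

Lemma ole_meet {x y z : S} : z ≤ x -> z ≤ y -> z ≤ x ∩ y.
Proof. intros hx hy. unfold ole. rewrite meetA, <- hx, <- hy. reflexivity. Qed.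

End Semilattice.

Section OSemilattice.
Hypothesis Ho : is_o_semilattice meet join.

Let Hs : is_semilattice meet := proj1 Ho.
Let meetC : forall x y, x ∩ y = y ∩ x := proj1 (proj2 Hs).
Let join_ubl : forall x y, x ≤ x ⊔ y := proj1 (proj2 Ho).
Let join_meet_ole : forall x y z, x ∩ y ⊔ y ∩ z ≤ y :=
  proj1 (proj2 (proj2 Ho)).
Let meet_ole_join_meet : forall x y z, x ∩ z ≤ x ∩ y ⊔ z :=
  proj2 (proj2 (proj2 (proj2 Ho))).

Lemma join_ole {u v q : S} : u ≤ q -> v ≤ q -> u ⊔ v ≤ q.
Proof.
  intros hu hv. pose proof (join_meet_ole u q v) as h.
  rewrite <- hu, (meetC q v), <- hv in h. exact h.
Qed.

Lemma ole_joinr {u v q : S} : u ≤ q -> v ≤ q -> v ≤ u ⊔ v.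
Proof.
  intros hu hv. pose proof (meet_ole_join_meet q u v) as h.
  rewrite (meetC q v), <- hv, (meetC q u), <- hu in h. exact h.
Qed.

Lemma joinC_bounded {u v q : S} : u ≤ q -> v ≤ q -> u ⊔ v = v ⊔ u.
Proof.
  intros hu hv. apply (ole_anti Hs).
  - apply join_ole; [exact (ole_joinr hv hu) | apply join_ubl].
  - apply join_ole; [exact (ole_joinr hu hv) | apply join_ubl].
Qed.

Lemma join_r {u v : S} : u ≤ v -> u ⊔ v = v.
Proof.
  intros h. apply (ole_anti Hs).
  - exact (join_ole h (ole_refl Hs v)).
  - exact (ole_joinr h (ole_refl Hs v)).
Qed.

Lemma ole_olesim {u v : S} : u ≤ v -> u ≲ v.
Proof.
  intros h. unfold olesim. apply (ole_anti Hs).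
  - exact (join_ole (ole_refl Hs v) h).
  - apply join_ubl.
Qed.

Lemma ole_meet_join_join (x y : S) : x ≤ y ∩ (x ⊔ y) ⊔ x.
Proof.
  pose proof (meet_ole_join_meet (x ⊔ y) y x) as h.
  rewrite (meetC (x ⊔ y) x), <- (join_ubl x y), (meetC (x ⊔ y) y) in h.
  exact h.
Qed.

End OSemilattice.

Section AssocOSemilattice.
Hypothesis Ho : is_o_semilattice meet join.
Hypothesis joinA : forall x y z, x ⊔ (y ⊔ z) = x ⊔ y ⊔ z.

Let Hs : is_semilattice meet := proj1 Ho.
Let join_ubl : forall x y, x ≤ x ⊔ y := proj1 (proj2 Ho).
Let join_ole_join_meet_join : forall x y, x ⊔ y ≤ x ⊔ y ∩ (x ⊔ y) :=
  proj1 (proj2 (proj2 (proj2 Ho))).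

Lemma join_monor (p : S) {x y : S} : x ≤ y -> p ⊔ x ≤ p ⊔ y.
Proof. intros h. rewrite <- (join_r Ho h), joinA. apply join_ubl. Qed.

Lemma olesim_trans {d x y : S} : d ≲ x -> x ≲ y -> d ≲ y.
Proof.
  unfold olesim. intros hdx hxy.
  rewrite <- hxy, <- joinA, hdx. reflexivity.
Qed.

Lemma olesim_ole_trans {d x y : S} : d ≲ x -> x ≤ y -> d ≲ y.
Proof. intros hdx hxy. exact (olesim_trans hdx (ole_olesim Ho hxy)). Qed.

Lemma join_meet_join (x y : S) : x ⊔ y ∩ (x ⊔ y) = x ⊔ y.
Proof.
  apply (ole_anti Hs).
  - apply join_monor, meet_ole_l, Hs.
  - apply join_ole_join_meet_join.
Qed.

Lemma join_meet_join_bounded {q d z : S} :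
  z ≤ q -> d ≲ z -> z ⊔ q ∩ (d ⊔ q) = q.
Proof.
  unfold olesim. intros hzq hdz.
  rewrite <- hdz, <- joinA, join_meet_join, joinA, hdz.
  exact (join_r Ho hzq).
Qed.

Lemma join_ole_of_join_meet_join {q d m : S} :
  m ⊔ q ∩ (d ⊔ q) = q -> d ≲ q -> m ⊔ d ≤ q.
Proof.
  unfold olesim. intros hm hdq.
  apply (ole_trans Hs (y := m ⊔ (q ∩ (d ⊔ q) ⊔ d))).
  - apply join_monor, ole_meet_join_join, Ho.
  - rewrite joinA, hm, hdq. apply (ole_refl Hs).
Qed.

Lemma join_ole_of_olesim {q d m z : S} :
  m ≤ z -> z ≤ q -> m ⊔ d ≤ q -> d ≲ z -> m ⊔ d ≤ z.
Proof.
  unfold olesim. intros hmz hzq hmdq hdz.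
  assert (hz : z ⊔ (m ⊔ d) = z).
  { rewrite joinA, (ole_olesim Ho hmz). exact hdz. }
  rewrite <- hz. exact (ole_joinr Ho hzq hmdq).
Qed.

End AssocOSemilattice.

Section AdoSemilattice.
Hypothesis Hado : is_ado_semilattice meet join.

Let Ho : is_o_semilattice meet join := proj1 Hado.
Let Hs : is_semilattice meet := proj1 Ho.
Let meetI : forall x, x ∩ x = x := proj2 (proj2 Hs).
Let join_ubl : forall x y, x ≤ x ⊔ y := proj1 (proj2 Ho).
Let distr : is_distributive meet join := proj1 (proj2 Hado).
Let joinA : forall x y z, x ⊔ (y ⊔ z) = x ⊔ y ⊔ z := proj2 (proj2 Hado).

Lemma meet_join_meet_join_bounded {q d x y : S} :
  x ≤ q -> y ≤ q -> d ≲ x -> d ≲ y -> x ∩ y ⊔ q ∩ (d ⊔ q) = q.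
Proof.
  intros hx hy hdx hdy.
  assert (ht : q ∩ (d ⊔ q) ≤ q) by apply (meet_ole_l Hs).
  assert (hxy : x ∩ y ≤ q) by exact (ole_trans Hs (meet_ole_l Hs x y) hx).
  pose proof (distr (q ∩ (d ⊔ q)) x y q) as h.
  rewrite <- ht, <- hx, <- hy in h.
  rewrite (joinC_bounded Ho hxy ht), h.
  rewrite (joinC_bounded Ho ht hx), (joinC_bounded Ho ht hy).
  rewrite (join_meet_join_bounded Ho joinA hx hdx).
  rewrite (join_meet_join_bounded Ho joinA hy hdy).
  apply meetI.
Qed.

Lemma olesim_meet_bounded {q d x y : S} :
  x ≤ q -> y ≤ q -> d ≲ x -> d ≲ y -> d ≲ x ∩ y.
Proof.
  intros hx hy hdx hdy.
  assert (hdq : d ≲ q) by exact (olesim_ole_trans Ho joinA hdx hx).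
  assert (hxyd : x ∩ y ⊔ d ≤ q).
  { apply (join_ole_of_join_meet_join Ho joinA); [|exact hdq].
    exact (meet_join_meet_join_bounded hx hy hdx hdy). }
  unfold olesim. apply (ole_anti Hs).
  - apply (ole_meet Hs).
    + exact (join_ole_of_olesim Ho joinA (meet_ole_l Hs x y) hx hxyd hdx).
    + exact (join_ole_of_olesim Ho joinA (meet_ole_r Hs x y) hy hxyd hdy).
  - apply join_ubl.
Qed.

Lemma olesim_meet_trans (a b c d : S) :
  d ≲ a ∩ b -> d ≲ b ∩ c -> d ≲ a ∩ c.
Proof.
  intros hab hbc.
  apply (olesim_ole_trans Ho joinA (x := a ∩ b ∩ (b ∩ c))).
  - exact (olesim_meet_bounded (meet_ole_r Hs a b) (meet_ole_l Hs b c) hab hbc).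
  - apply (ole_meet Hs).
    + exact (ole_trans Hs (meet_ole_l Hs _ _) (meet_ole_l Hs a b)).
    + exact (ole_trans Hs (meet_ole_r Hs _ _) (meet_ole_r Hs b c)).
Qed.

Lemma olesim_ovee_meet (a b d : S) :
  d ≲ a -> d ≲ b -> d ≲ ovee meet join a b -> d ≲ a ∩ b.
Proof.
  intros ha hb hw.
  set (w := ovee meet join a b) in *.
  assert (haw : d ≲ a ∩ w).
  { exact (olesim_meet_bounded (join_ubl a b) (meet_ole_l Hs _ _) ha hw). }
  assert (hbw : d ≲ b ∩ w).
  { exact (olesim_meet_bounded (join_ubl b a) (meet_ole_r Hs _ _) hb hw). }
  apply (olesim_ole_trans Ho joinA (x := a ∩ w ∩ (b ∩ w))).
  - exact (olesim_meet_bounded (meet_ole_r Hs a w) (meet_ole_r Hs b w) haw hbw).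
  - apply (ole_meet Hs).
    + exact (ole_trans Hs (meet_ole_l Hs _ _) (meet_ole_l Hs a w)).
    + exact (ole_trans Hs (meet_ole_r Hs _ _) (meet_ole_l Hs b w)).
Qed.

End AdoSemilattice.

End OSemilattices.

Theorem lemma3p6 (S : Type) (meet join : S -> S -> S)
  (H : is_ado_semilattice meet join) :
  forall a b c d : S,
    (olesim join d (meet a b) -> olesim join d (meet b c) ->
       olesim join d (meet a c)) /\
    (olesim join d a -> olesim join d b -> olesim join d (ovee meet join a b) ->
       olesim join d (meet a b)).
Proof.
  intros a b c d. split.
  - exact (olesim_meet_trans H a b c d).
  - exact (olesim_ovee_meet H a b d).
Qed.
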